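(* Let $T$ be a countably infinite tournament. Then either $T$ has a quasi-kernel, or there exist vertices $x,y\in V(T)$ such that $V(T)=\Gamma^-(x)\cup\Gamma^+(y)$.
   Context: A tournament is a digraph in which every pair of distinct vertices is joined by exactly one directed edge. $\Gamma^+(v)$ and $\Gamma^-(v)$ denote the sets of out-neighbours and in-neighbours of $v$; for a vertex set $V'$, $\Gamma^+(V')$ is the union of the out-neighbourhoods of its vertices and $\Gamma^+_2(V')=V'\cup\Gamma^+(V')\cup\Gamma^+(\Gamma^+(V'))$. A quasi-kernel is an independent set $Q$ with $\Gamma^+_2(Q)=V(T)$. *)

Definition is_tournament {V : Type} (arc : V -> V -> Prop) : Prop :=
  (forall v, ~ arc v v) /\
  (forall u v, u <> v -> (arc u v \/ arc v u) /\ ~ (arc u v /\ arc v u)).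

Definition countably_infinite (V : Type) : Prop :=
  exists f : nat -> V,
    (forall m n, f m = f n -> m = n) /\ (forall v, exists n, f n = v).

Definition out_nbhd {V : Type} (arc : V -> V -> Prop) (v : V) : V -> Prop :=
  fun w => arc v w.
Definition in_nbhd {V : Type} (arc : V -> V -> Prop) (v : V) : V -> Prop :=
  fun w => arc w v.

Definition out_set {V : Type} (arc : V -> V -> Prop) (S : V -> Prop) : V -> Prop :=
  fun w => exists s, S s /\ out_nbhd arc s w.

Definition out2_set {V : Type} (arc : V -> V -> Prop) (S : V -> Prop) : V -> Prop :=
  fun w => S w \/ out_set arc S w \/ out_set arc (out_set arc S) w.

Definition independent {V : Type} (arc : V -> V -> Prop) (Q : V -> Prop) : Prop :=
  forall u v, Q u -> Q v -> ~ arc u v.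

Definition quasi_kernel {V : Type} (arc : V -> V -> Prop) (Q : V -> Prop) : Prop :=
  independent arc Q /\ (forall w, out2_set arc Q w).

From Stdlib Require Import Classical.

(* Fix any vertex q and consider the singleton Q = {q}, which is
   trivially independent since tournaments have no loops.  Either Q reaches
   every vertex within two steps, and is then a quasi-kernel, or some vertex w
   escapes Gamma^+_2({q}).  Such a w satisfies w -> q, and every other vertex v
   either points to q or, if q -> v, is dominated by w (otherwise w would be
   reached through v, or v = w would be reached from q directly).  Hence
   V = Gamma^-(q) ∪ Gamma^+(w). *)

Section SingletonDichotomy.

Variable V : Type.
Variable arc : V -> V -> Prop.
Hypothesis tournament : is_tournament arc.

Lemma tournament_reverse (u v : V) : u <> v -> ~ arc u v -> arc v u.
Proof.
  intros Huv Hnot.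
  destruct (proj1 (proj2 tournament u v Huv)) as [Hab | Hba].
  - contradiction.
  - exact Hba.
Qed.

Lemma singleton_independent (q : V) : independent arc (fun v => v = q).
Proof.
  intros u v -> ->. apply (proj1 tournament).
Qed.

Lemma escape_gives_cover (q w : V) :
  ~ out2_set arc (fun v => v = q) w ->
  forall v, in_nbhd arc q v \/ out_nbhd arc w v.
Proof.
  unfold out2_set, out_set, out_nbhd, in_nbhd.
  intros Hesc v.
  assert (Hwq : w <> q) by (intro Heq; apply Hesc; left; exact Heq).
  assert (Hnqw : ~ arc q w) by (intro Hqw; apply Hesc; right; left; eauto).
  destruct (classic (v = q)) as [-> | Hvq].
  { right. apply tournament_reverse; [congruence | exact Hnqw]. }
  destruct (classic (arc v q)) as [Hvarc | Hnvq]; [left; exact Hvarc |].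
  (* Otherwise q -> v: v is one step from q, so it is neither w nor a
     predecessor of w. *)
  assert (Hqv : arc q v)
    by (apply tournament_reverse; [exact Hvq | exact Hnvq]).
  assert (Hvw : v <> w) by (intros ->; contradiction).
  assert (Hnvw : ~ arc v w)
    by (intro Hvwarc; apply Hesc; right; right; exists v; split; [exists q; auto | exact Hvwarc]).
  right. apply tournament_reverse; [exact Hvw | exact Hnvw].
Qed.

Lemma singleton_quasi_kernel_or_cover (q : V) :
  quasi_kernel arc (fun v => v = q) \/
  exists y, forall v, in_nbhd arc q v \/ out_nbhd arc y v.
Proof.
  destruct (classic (forall w, out2_set arc (fun v => v = q) w)) as [Hall | Hnall].
  - left. split; [apply singleton_independent | exact Hall].
  - right. apply not_all_ex_not in Hnall as [w Hw].
    exists w. exact (escape_gives_cover q w Hw).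
Qed.

End SingletonDichotomy.

Theorem mainTheorem9 (V : Type) (arc : V -> V -> Prop) :
  is_tournament arc -> countably_infinite V ->
  (exists Q : V -> Prop, quasi_kernel arc Q) \/
  (exists x y : V, forall v : V, in_nbhd arc x v \/ out_nbhd arc y v).
Proof.
  intros Htour [enum _].
  (* Any vertex will do; the enumeration supplies one. *)
  destruct (singleton_quasi_kernel_or_cover V arc Htour (enum 0)) as [Hqk | [y Hcover]].
  - left. exists (fun v => v = enum 0). exact Hqk.
  - right. exists (enum 0), y. exact Hcover.
Qed.
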